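(* Let $(F_n)_{n\ge 0}$ be the Fibonacci sequence with $F_0=0$, $F_1=1$, $F_n=F_{n-1}+F_{n-2}$ for $n\ge2$. For all integers $k\ge 0$ and $m\ge 0$, $$[\underbrace{4,4,\dots,4}_{m},\,2k+3]=\frac{F_{3m+4}+k\,F_{3m+3}}{F_{3m+1}+k\,F_{3m}},$$ where the continued fraction has $m+1$ entries $a_0,\dots,a_m$ with $a_i=4$ for $0\le i<m$ and $a_m=2k+3$.
   Context: For numbers $a_0,a_1,\dots,a_m$, the finite simple continued fraction $[a_0,a_1,\dots,a_m]$ denotes $a_0+\cfrac{1}{a_1+\cfrac{1}{\ddots+\cfrac{1}{a_m}}}$, evaluated as a rational number; $[a_0]=a_0$. *)

From HB Require Import structures.
From mathcomp Require Import all_boot all_order all_algebra.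
Set Implicit Arguments. Unset Strict Implicit. Unset Printing Implicit Defensive.
Import Order.TTheory GRing.Theory Num.Theory.
Local Open Scope ring_scope.

Fixpoint fib (n : nat) : nat :=
  match n with
  | 0 => 0
  | 1 => 1
  | (m.+1 as p).+1 => fib p + fib m
  end%N.

(* Finite simple continued fraction [a_0; a_1, ..., a_m] evaluated in rat.
   cf [::] is an unused default (0); cf [:: a] = a;
   cf (a :: s) = a + 1 / cf s for s nonempty. *)
Fixpoint cf (s : seq rat) : rat :=
  match s with
  | [::] => 0
  | [:: a] => a
  | a :: t => a + (cf t)^-1
  end.

From mathcomp Require Import all_boot all_order all_algebra.
From mathcomp Require Import zify ring.
Import GRing.Theory Num.Theory.
Local Open Scope ring_scope.

(* Write p_m = F_{3m+4} + k F_{3m+3} and q_m = F_{3m+1} + k F_{3m}.  The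
   identity F_{n+6} = 4 F_{n+3} + F_n gives p_{m+1} = 4 p_m + q_m and
   q_{m+1} = p_m, so p_{m+1} / q_{m+1} = 4 + 1 / (p_m / q_m): prepending a 4
   to the continued fraction. *)

Lemma cf_cons (a : rat) (s : seq rat) : s != [::] -> cf (a :: s) = a + (cf s)^-1.
Proof. by case: s. Qed.

Lemma cf_nseqS_rcons (a x : rat) (m : nat) :
  cf (rcons (nseq m.+1 a) x) = a + (cf (rcons (nseq m a) x))^-1.
Proof. by rewrite [nseq _ _]/= rcons_cons cf_cons // -size_eq0 size_rcons. Qed.

Lemma fibSS (n : nat) : fib n.+2 = (fib n.+1 + fib n)%N.
Proof. by []. Qed.

Lemma fib_add6 (n : nat) : fib (n + 6) = (4 * fib (n + 3) + fib n)%N.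
Proof. rewrite !addnS addn0 !fibSS; lia. Qed.

Lemma fib_gt0 (n : nat) : (0 < fib n.+1)%N.
Proof. by elim: n => [|n IHn] //; rewrite fibSS ltn_addr. Qed.

Section Convergents.

Variable k : nat.

Definition cf_num (m : nat) : nat := fib (3 * m + 4) + k * fib (3 * m + 3).
Definition cf_den (m : nat) : nat := fib (3 * m + 1) + k * fib (3 * m).

Lemma cf_numS (m : nat) : cf_num m.+1 = (4 * cf_num m + cf_den m)%N.
Proof.
rewrite /cf_num /cf_den.
have -> : (3 * m.+1 + 4 = 3 * m + 1 + 6)%N by lia.
have -> : (3 * m.+1 + 3 = 3 * m + 6)%N by lia.
rewrite !fib_add6 (_ : 3 * m + 1 + 3 = 3 * m + 4)%N; lia.
Qed.

Lemma cf_denS (m : nat) : cf_den m.+1 = cf_num m.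
Proof.
rewrite /cf_den /cf_num.
have -> : (3 * m.+1 = 3 * m + 3)%N by lia.
by rewrite -addnA.
Qed.

Lemma cf_num_gt0 (m : nat) : (0 < cf_num m)%N.
Proof. by rewrite /cf_num addnS ltn_addr // fib_gt0. Qed.

Lemma cf_nseq4_rcons (m : nat) :
  cf (rcons (nseq m 4) (2 * k + 3)%N%:R) = (cf_num m)%:R / (cf_den m)%:R.
Proof.
elim: m => [|m IHm]; first by rewrite /cf_num /cf_den /= muln0 addn0 divr1; congr _%:R; lia.
have num_neq0 : (cf_num m)%:R != 0 :> rat by rewrite pnatr_eq0 -lt0n cf_num_gt0.
rewrite cf_nseqS_rcons IHm invf_div cf_numS cf_denS natrD natrM.
by field.
Qed.

End Convergents.

Theorem theorem2 (k m : nat) :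
  cf (rcons (nseq m (4%:R : rat)) (2 * k + 3)%N%:R)
  = ((fib (3 * m + 4))%:R + k%:R * (fib (3 * m + 3))%:R)
    / ((fib (3 * m + 1))%:R + k%:R * (fib (3 * m))%:R).
Proof. by rewrite cf_nseq4_rcons /cf_num /cf_den !natrD !natrM. Qed.
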